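(* For every $v\in\{0,\dots,n-1\}$, every $\pi\in\Pi$ and every $f_{\mathcal E_v^+}\in\mathcal F_v$, $$\sum_{e\in\mathcal E_v^+}\sigma_e\big(\lambda^\pi_v\,G^v_e(f_{\mathcal E_v^+},\pi)-f^\pi_e\big)\le0,$$ where $\lambda^\pi_v:=\sum_{e\in\mathcal E_v^+}f^\pi_e$ and $\sigma_e:=\mathrm{sgn}(f_e-f^\pi_e)$ (with $\mathrm{sgn}(0)=0$).
   Context: $\mathcal G=(\mathcal V,\mathcal E)$ is a finite directed graph with $\mathcal V=\{0,1,\dots,n\}$, containing no directed cycle, in which node $0$ is the unique node with no incoming link, node $n$ is the unique node with no outgoing link, there is a directed path from every node to $n$, and every link $(u,v)\in\mathcal E$ satisfies $u<v$. For $v\in\mathcal V$, $\mathcal E_v^-$ and $\mathcal E_v^+$ are the sets of links entering and leaving $v$. Each link $e$ has a capacity $C_e\in(0,+\infty]$; $\mathcal F_v:=\prod_{e\in\mathcal E_v^+}[0,C_e)$. $\mathcal P$ is the set of directed paths from $0$ to $n$, $A$ the link-path incidence matrix ($A_{ep}=1$ iff $e\in p$), $\mathcal S(\cdot)$ denotes a probability simplex, $\Pi:=\{\pi\in\mathcal S(\mathcal P):(A\pi)_e<C_e\ \forall e\}$, and $f^\pi:=A\pi$. For each $v\in\{0,\dots,n-1\}$ a continuously differentiable $G^v:\mathcal F_v\times\Pi\to\mathcal S(\mathcal E_v^+)$ is given such that (consistency) $(\sum_{j\in\mathcal E_v^+}f^\pi_j)\,G^v_e(f^\pi_{\mathcal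 E_v^+},\pi)=f^\pi_e$ for all $\pi\in\Pi$, $e\in\mathcal E_v^+$, where $f^\pi_{\mathcal E_v^+}=(f^\pi_j)_{j\in\mathcal E_v^+}$; and (cooperativity) $\partial G^v_j(f_{\mathcal E_v^+},\pi)/\partial f_e\ge0$ for all $\pi\in\Pi$, $f_{\mathcal E_v^+}\in\mathcal F_v$, $j\neq e\in\mathcal E_v^+$. *)

From Stdlib Require Import Reals Lra List Bool Arith.
Import ListNotations.
Open Scope R_scope.

Definition edge := (nat * nat)%type.

Definition edge_eqb (a b : edge) : bool :=
  Nat.eqb (fst a) (fst b) && Nat.eqb (snd a) (snd b).

Definition lsum {A : Type} (l : list A) (g : A -> R) : R :=
  fold_right (fun a acc => g a + acc) 0 l.

(* capacities in (0,+oo]: [None] encodes +oo *)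
Definition below_cap (x : R) (c : option R) : Prop :=
  match c with None => True | Some c => x < c end.

Definition capdom (c : option R) (x : R) : Prop := 0 <= x /\ below_cap x c.

Definition sgn (x : R) : R :=
  if Rlt_dec 0 x then 1 else if Rlt_dec x 0 then -1 else 0.

Definition out_edges (E : list edge) (v : nat) : list edge :=
  filter (fun e => Nat.eqb (fst e) v) E.

Inductive is_path (E : list edge) : nat -> nat -> list edge -> Prop :=
| path_nil : forall u, is_path E u u []
| path_cons : forall u x w p, In (u, x) E -> is_path E x w p ->
    is_path E u w ((u, x) :: p).

Definition good_graph (n : nat) (E : list edge) : Prop :=
  NoDup E /\
  (forall u w, In (u, w) E -> (u < w)%nat /\ (w <= n)%nat) /\
  (forall w, (1 <= w <= n)%nat -> exists u, In (u, w) E) /\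
  (forall u, (u < n)%nat -> exists w, In (u, w) E) /\
  (forall u, (u <= n)%nat -> exists p, is_path E u n p).

Definition enum_paths (n : nat) (E : list edge) (Ps : list (list edge)) : Prop :=
  NoDup Ps /\ forall p, In p Ps <-> is_path E 0 n p.

Definition flow (Ps : list (list edge)) (pi : list edge -> R) (e : edge) : R :=
  lsum Ps (fun p => if existsb (edge_eqb e) p then pi p else 0).

Definition inPi (n : nat) (E : list edge) (C : edge -> option R)
  (Ps : list (list edge)) (pi : list edge -> R) : Prop :=
  (forall p, ~ is_path E 0 n p -> pi p = 0) /\
  (forall p, 0 <= pi p) /\
  lsum Ps pi = 1 /\
  (forall e, In e E -> below_cap (flow Ps pi e) (C e)).

(* f_{E_v^+} in F_v (only the coordinates on E_v^+ matter) *)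
Definition inF (E : list edge) (C : edge -> option R) (v : nat) (f : edge -> R) : Prop :=
  forall e, In e (out_edges E v) -> capdom (C e) (f e).

Definition lam (E : list edge) (Ps : list (list edge)) (pi : list edge -> R) (v : nat) : R :=
  lsum (out_edges E v) (flow Ps pi).

Definition upd (f : edge -> R) (e : edge) (x : R) : edge -> R :=
  fun e' => if edge_eqb e' e then x else f e'.

(* derivative of phi at x relative to the domain dom (one-sided at boundary) *)
Definition deriv_within (dom : R -> Prop) (phi : R -> R) (x l : R) : Prop :=
  forall eps, 0 < eps -> exists delta, 0 < delta /\
    forall h, h <> 0 -> Rabs h < delta -> dom (x + h) ->
      Rabs ((phi (x + h) - phi x) / h - l) < eps.

Definition cont_on_F (E : list edge) (C : edge -> option R) (v : nat)
  (h : (edge -> R) -> R) : Prop :=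
  forall f, inF E C v f -> forall eps, 0 < eps -> exists delta, 0 < delta /\
    forall g, inF E C v g ->
      (forall e, In e (out_edges E v) -> Rabs (g e - f e) < delta) ->
      Rabs (h g - h f) < eps.

(* Put Phi(g) := sum_j sgn(f_j - f^pi_j) G^v_j(g).  By consistency the sum in the
   theorem equals lambda^pi_v (Phi(f) - Phi(f^pi)) with lambda^pi_v >= 0, so it suffices
   to show Phi(f) <= Phi(f^pi).  Move from f^pi to f one coordinate e at a time.  Since
   G^v is simplex-valued, sum_j dG_j/df_e = 0, so along coordinate e the derivative of
   Phi is sum_{j <> e} (sigma_j - sigma_e) dG_j/df_e; by cooperativity its sign is
   opposite to sigma_e, the direction of the move, hence Phi never increases. *)
From Stdlib Require Import Reals List.
From Stdlib Require Import Lra Classical FunctionalExtensionality Bool.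
Open Scope R_scope.

Lemma lsum_le {A : Type} (L : list A) f1 f2 :
  (forall j, In j L -> f1 j <= f2 j) -> lsum L f1 <= lsum L f2.
Proof.
  induction L as [|a L IH]; intros H; unfold lsum; simpl; [lra|].
  apply Rplus_le_compat; [apply H; simpl; auto|].
  apply IH; intros; apply H; simpl; auto.
Qed.

Lemma lsum_ext {A : Type} (L : list A) f1 f2 :
  (forall j, In j L -> f1 j = f2 j) -> lsum L f1 = lsum L f2.
Proof.
  intros H. apply Rle_antisym; apply lsum_le; intros j Hj; rewrite H; auto; lra.
Qed.

Lemma lsum_const0 {A : Type} (L : list A) : lsum L (fun _ => 0) = 0.
Proof. induction L; unfold lsum in *; simpl; [|rewrite IHL]; ring. Qed.

Lemma lsum_nonneg {A : Type} (L : list A) f :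
  (forall j, In j L -> 0 <= f j) -> 0 <= lsum L f.
Proof. intros H. rewrite <- (lsum_const0 L). apply lsum_le; auto. Qed.

Lemma lsum_plus {A : Type} (L : list A) f g :
  lsum L (fun j => f j + g j) = lsum L f + lsum L g.
Proof. induction L; unfold lsum in *; simpl; [|rewrite IHL]; ring. Qed.

Lemma lsum_scal {A : Type} (L : list A) c f :
  lsum L (fun j => c * f j) = c * lsum L f.
Proof. induction L; unfold lsum in *; simpl; [|rewrite IHL]; ring. Qed.

Lemma deriv_within_const dom x k : deriv_within dom (fun _ => k) x 0.
Proof.
  intros eps Heps. exists 1; split; [lra|]. intros h Hh _ _.
  replace ((k - k) / h - 0) with 0 by (field; auto). rewrite Rabs_R0; auto.
Qed.

Lemma deriv_within_plus dom p1 p2 x l1 l2 :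
  deriv_within dom p1 x l1 -> deriv_within dom p2 x l2 ->
  deriv_within dom (fun y => p1 y + p2 y) x (l1 + l2).
Proof.
  intros H1 H2 eps Heps.
  destruct (H1 (eps / 2)) as [d1 [Hd1 Hq1]]; [lra|].
  destruct (H2 (eps / 2)) as [d2 [Hd2 Hq2]]; [lra|].
  exists (Rmin d1 d2); split; [apply Rmin_pos; auto|].
  intros h Hh0 Hh Hdom.
  assert (A1 := Hq1 h Hh0 (Rlt_le_trans _ _ _ Hh (Rmin_l _ _)) Hdom).
  assert (A2 := Hq2 h Hh0 (Rlt_le_trans _ _ _ Hh (Rmin_r _ _)) Hdom).
  replace ((p1 (x + h) + p2 (x + h) - (p1 x + p2 x)) / h - (l1 + l2)) with
    (((p1 (x + h) - p1 x) / h - l1) + ((p2 (x + h) - p2 x) / h - l2)) by (field; auto).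
  eapply Rle_lt_trans; [apply Rabs_triang|]. lra.
Qed.

Lemma deriv_within_scal dom p x l c :
  deriv_within dom p x l -> deriv_within dom (fun y => c * p y) x (c * l).
Proof.
  intros H eps Heps.
  assert (Hc : 0 < Rabs c + 1) by (pose proof (Rabs_pos c); lra).
  destruct (H (eps / (Rabs c + 1))) as [d [Hd Hq]]; [apply Rdiv_lt_0_compat; auto|].
  exists d; split; auto. intros h H1 H2 H3. specialize (Hq h H1 H2 H3).
  replace ((c * p (x + h) - c * p x) / h - c * l) with (c * ((p (x + h) - p x) / h - l))
    by (field; auto).
  rewrite Rabs_mult.
  set (r := Rabs ((p (x + h) - p x) / h - l)) in *.
  assert (0 <= r) by apply Rabs_pos.
  assert (Hr : (Rabs c + 1) * r < eps).
  { replace eps with ((Rabs c + 1) * (eps / (Rabs c + 1))) by (field; lra).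
    apply Rmult_lt_compat_l; auto. }
  nra.
Qed.

Lemma deriv_within_lsum {A : Type} dom x (L : list A) (phis : A -> R -> R) ls :
  (forall j, In j L -> deriv_within dom (phis j) x (ls j)) ->
  deriv_within dom (fun y => lsum L (fun j => phis j y)) x (lsum L ls).
Proof.
  induction L as [|a L IH]; intros H; unfold lsum; simpl.
  - apply deriv_within_const.
  - apply deriv_within_plus; [apply H; simpl; auto|].
    apply IH; intros; apply H; simpl; auto.
Qed.

Lemma deriv_within_constant_eq0 dom phi x l k :
  (forall y, dom y -> phi y = k) -> dom x ->
  (forall d, 0 < d -> exists h, h <> 0 /\ Rabs h < d /\ dom (x + h)) ->
  deriv_within dom phi x l -> l = 0.
Proof.
  intros Hk Hx Hacc H.
  destruct (Req_dec l 0) as [|Hl]; auto. exfalso.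
  assert (Hl' : 0 < Rabs l) by (apply Rabs_pos_lt; auto).
  destruct (H (Rabs l) Hl') as [d [Hd Hq]].
  destruct (Hacc d Hd) as [h [H1 [H2 H3]]].
  specialize (Hq h H1 H2 H3). rewrite (Hk _ H3), (Hk _ Hx) in Hq.
  replace ((k - k) / h - l) with (- l) in Hq by (field; auto).
  rewrite Rabs_Ropp in Hq. lra.
Qed.

Section Monotone.

Variables (dom : R -> Prop) (rho D : R -> R) (a b : R).
Hypothesis Hab : a <= b.
Hypothesis Hdom : forall x, a <= x <= b -> dom x.
Hypothesis Hder : forall x, a <= x <= b -> deriv_within dom rho x (D x).
Hypothesis HD : forall x, a <= x <= b -> 0 <= D x.

Lemma difference_quotient_gt x eps : a <= x <= b -> 0 < eps ->
  exists d, 0 < d /\ forall h, h <> 0 -> Rabs h < d -> a <= x + h <= b ->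
    - eps < (rho (x + h) - rho x) / h.
Proof.
  intros Hx Heps. destruct (Hder x Hx eps Heps) as [d [Hd Hq]].
  exists d; split; auto. intros h H1 H2 H3.
  specialize (Hq h H1 H2 (Hdom _ H3)). apply Rabs_def2 in Hq.
  pose proof (HD x Hx). lra.
Qed.

(* The supremum of the set where rho stays above the line of slope -eps through
   (a, rho a) belongs to the set and cannot lie below b. *)
Lemma nondecreasing_up_to_eps eps : 0 < eps -> rho a - eps * (b - a) <= rho b.
Proof.
  intros Heps.
  set (S := fun y => a <= y <= b /\ rho a - eps * (y - a) <= rho y).
  assert (HSa : S a) by (unfold S; lra).
  assert (Hbnd : bound S) by (exists b; intros y [Hy _]; lra).
  destruct (completeness S Hbnd (ex_intro _ a HSa)) as [s [Hub Hlub]].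
  assert (Has : a <= s) by (apply Hub; auto).
  assert (Hsb : s <= b) by (apply Hlub; intros y [Hy _]; lra).
  destruct (difference_quotient_gt s eps (conj Has Hsb) Heps) as [d [Hd Hq]].
  assert (HSs : S s).
  { destruct (Req_dec s a) as [->|Hsa]; auto.
    set (m := Rmin d (s - a)).
    assert (Hm : 0 < m) by (apply Rmin_pos; lra).
    assert (Hmd : m <= d) by apply Rmin_l.
    destruct (classic (exists y, S y /\ s - m < y)) as [[y [[Hy1 Hy2] Hy3]]|Hnone].
    - assert (Hys : y <= s) by (apply Hub; split; auto).
      destruct (Req_dec y s) as [<-|Hys']; [split; auto|].
      specialize (Hq (y - s) ltac:(lra) ltac:(rewrite Rabs_left; lra)
                    ltac:(replace (s + (y - s)) with y by ring; lra)).
      replace (s + (y - s)) with y in Hq by ring.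
      assert (rho y - rho s = (rho y - rho s) / (y - s) * (y - s)) by (field; lra).
      split; [lra|]. nra.
    - exfalso.
      assert (Hub' : is_upper_bound S (s - m)).
      { intros y Hy. apply Rnot_lt_le. intro Hlt. apply Hnone. exists y; auto. }
      specialize (Hlub _ Hub'). lra. }
  destruct (Req_dec s b) as [<-|Hsb']; [apply HSs|exfalso].
  set (h := Rmin (d / 2) (b - s)).
  assert (Hh : 0 < h) by (apply Rmin_pos; lra).
  assert (Hh1 : h <= d / 2) by apply Rmin_l.
  assert (Hh2 : h <= b - s) by apply Rmin_r.
  specialize (Hq h ltac:(lra) ltac:(rewrite Rabs_pos_eq; lra) ltac:(lra)).
  assert (rho (s + h) - rho s = (rho (s + h) - rho s) / h * h) by (field; lra).
  assert (HSh : S (s + h)) by (destruct HSs; split; [lra|nra]).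
  specialize (Hub _ HSh). lra.
Qed.

Lemma nondecreasing_deriv_nonneg : rho a <= rho b.
Proof.
  apply Rnot_lt_le. intro Hlt.
  set (eps := (rho a - rho b) / (b - a + 1)).
  assert (He : 0 < eps) by (apply Rdiv_lt_0_compat; lra).
  pose proof (nondecreasing_up_to_eps eps He).
  assert (eps * (b - a + 1) = rho a - rho b) by (unfold eps; field; lra).
  nra.
Qed.

End Monotone.

Lemma sgn_cases x :
  (0 < x /\ sgn x = 1) \/ (x = 0 /\ sgn x = 0) \/ (x < 0 /\ sgn x = -1).
Proof.
  unfold sgn. destruct (Rlt_dec 0 x); [lra|]. destruct (Rlt_dec x 0); lra.
Qed.

Lemma sgn_bound x : -1 <= sgn x <= 1.
Proof. destruct (sgn_cases x) as [[_ ->]|[[_ ->]|[_ ->]]]; lra. Qed.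

Lemma deriv_against_direction dom rho D a b :
  (forall x, Rmin a b <= x <= Rmax a b -> dom x) ->
  (forall x, Rmin a b <= x <= Rmax a b -> deriv_within dom rho x (D x)) ->
  (forall x, Rmin a b <= x <= Rmax a b -> sgn (b - a) * D x <= 0) ->
  rho b <= rho a.
Proof.
  intros Hdom Hder HD.
  destruct (sgn_cases (b - a)) as [[Hba Hs]|[[Hba _]|[Hba Hs]]];
    rewrite ?Hs in HD.
  - rewrite Rmin_left, Rmax_right in * by lra.
    assert (Hopp : forall x, a <= x <= b ->
              deriv_within dom (fun y => -1 * rho y) x (-1 * D x)).
    { intros x Hx. apply deriv_within_scal; auto. }
    pose proof (nondecreasing_deriv_nonneg dom (fun y => -1 * rho y) (fun x => -1 * D x)
                  a b ltac:(lra) Hdom Hopp ltac:(intros x Hx; specialize (HD x Hx); lra)).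
    lra.
  - replace b with a by lra. lra.
  - rewrite Rmin_right, Rmax_left in * by lra.
    apply (nondecreasing_deriv_nonneg dom rho D); auto; try lra.
    intros x Hx. specialize (HD x Hx). lra.
Qed.

Lemma edge_eqb_eq a b : edge_eqb a b = true <-> a = b.
Proof.
  destruct a, b; unfold edge_eqb; simpl. rewrite andb_true_iff, !Nat.eqb_eq.
  split; [intros [-> ->]; auto | intros H; inversion H; auto].
Qed.

Lemma upd_same g e x : upd g e x e = x.
Proof. unfold upd. replace (edge_eqb e e) with true; auto. symmetry. apply edge_eqb_eq; auto. Qed.

Lemma upd_other g e e' x : e' <> e -> upd g e x e' = g e'.
Proof.
  intros Hne. unfold upd. destruct (edge_eqb e' e) eqn:Q; auto.
  apply edge_eqb_eq in Q. contradiction.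
Qed.

Lemma upd_upd g e x y : upd (upd g e x) e y = upd g e y.
Proof. apply functional_extensionality; intro e'. unfold upd. destruct (edge_eqb e' e); auto. Qed.

Lemma upd_id g e : upd g e (g e) = g.
Proof.
  apply functional_extensionality; intro e'. unfold upd.
  destruct (edge_eqb e' e) eqn:Q; auto. apply edge_eqb_eq in Q; subst; auto.
Qed.

Lemma fold_upd_notin (f g : edge -> R) L e' : g e' = f e' ->
  fold_left (fun g e => upd g e (f e)) L g e' = f e'.
Proof.
  revert g; induction L as [|a L IH]; simpl; intros g H; auto. apply IH.
  destruct (classic (e' = a)) as [->|Hne]; [apply upd_same|rewrite upd_other; auto].
Qed.

Lemma fold_upd_in (f g : edge -> R) L e' : In e' L ->
  fold_left (fun g e => upd g e (f e)) L g e' = f e'.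
Proof.
  revert g; induction L as [|a L IH]; simpl; intros g H; [contradiction|].
  destruct H as [<-|H]; [apply fold_upd_notin, upd_same|apply IH; auto].
Qed.

Definition in_box (out : list edge) (dom : edge -> R -> Prop) (g : edge -> R) : Prop :=
  forall e, In e out -> dom e (g e).

Section Cooperative.

Variables (out : list edge) (dom : edge -> R -> Prop).
Variables (Gv : (edge -> R) -> edge -> R) (dG : edge -> edge -> (edge -> R) -> R).

Hypothesis dom_interval : forall e x y z, dom e x -> dom e z -> x <= y <= z -> dom e y.
Hypothesis dom_not_isolated : forall e x, dom e x ->
  forall d, 0 < d -> exists h, h <> 0 /\ Rabs h < d /\ dom e (x + h).
Hypothesis Gv_local : forall g g', (forall e, In e out -> g e = g' e) -> Gv g = Gv g'.
Hypothesis Gv_simplex : forall g, in_box out dom g -> lsum out (Gv g) = 1.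
Hypothesis Gv_deriv : forall j e g, In j out -> In e out -> in_box out dom g ->
  deriv_within (dom e) (fun x => Gv (upd g e x) j) (g e) (dG j e g).
Hypothesis Gv_cooperative : forall j e g, In j out -> In e out -> j <> e ->
  in_box out dom g -> 0 <= dG j e g.

Definition weighted_sum (sigma : edge -> R) (g : edge -> R) : R :=
  lsum out (fun j => sigma j * Gv g j).

Lemma in_box_upd g e x : in_box out dom g -> dom e x -> in_box out dom (upd g e x).
Proof.
  intros Hg Hx e' He'. destruct (classic (e' = e)) as [->|Hne].
  - rewrite upd_same; auto.
  - rewrite upd_other; auto.
Qed.

Lemma lsum_partials_eq0 g e : in_box out dom g -> In e out ->
  lsum out (fun j => dG j e g) = 0.
Proof.
  intros Hg He.
  apply (deriv_within_constant_eq0 (dom e)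
           (fun y => lsum out (fun j => Gv (upd g e y) j)) (g e) _ 1).
  - intros y Hy. apply Gv_simplex, in_box_upd; auto.
  - apply Hg; auto.
  - apply dom_not_isolated, Hg; auto.
  - apply deriv_within_lsum. intros j Hj. apply Gv_deriv; auto.
Qed.

(* Since the partials sum to 0, the directional derivative equals
   sum_j (sigma_j - sigma_e) dG_j/df_e, whose summands all have sign opposite to sigma_e. *)
Lemma sgn_weighted_partial_nonpos (s : edge -> R) g e :
  in_box out dom g -> In e out ->
  sgn (s e) * lsum out (fun j => sgn (s j) * dG j e g) <= 0.
Proof.
  intros Hg He.
  set (se := sgn (s e)).
  assert (Hrw : se * lsum out (fun j => sgn (s j) * dG j e g) =
                lsum out (fun j => se * (sgn (s j) - se) * dG j e g)).
  { replace (se * lsum out (fun j => sgn (s j) * dG j e g)) with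
      (se * lsum out (fun j => sgn (s j) * dG j e g)
       + (- se * se) * lsum out (fun j => dG j e g))
      by (rewrite lsum_partials_eq0; auto; ring).
    rewrite <- !lsum_scal, <- lsum_plus. apply lsum_ext. intros; ring. }
  rewrite Hrw, <- (lsum_const0 out). apply lsum_le. intros j Hj.
  destruct (classic (j = e)) as [->|Hne]; [unfold se; ring_simplify; lra|].
  pose proof (Gv_cooperative j e g Hj He Hne Hg).
  pose proof (sgn_bound (s j)).
  destruct (sgn_cases (s e)) as [[_ Hs]|[[_ Hs]|[_ Hs]]]; unfold se; rewrite Hs; nra.
Qed.

Section TowardsTarget.

Variables (f f0 : edge -> R).
Hypothesis f_box : in_box out dom f.

Let sigma (j : edge) : R := sgn (f j - f0 j).

Lemma weighted_sum_upd_le g e : in_box out dom g -> In e out -> g e = f0 e ->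
  weighted_sum sigma (upd g e (f e)) <= weighted_sum sigma g.
Proof.
  intros Hg He Hge.
  assert (Hseg : forall x, Rmin (f0 e) (f e) <= x <= Rmax (f0 e) (f e) -> dom e x).
  { intros x Hx. pose proof (Hg e He) as Ha. pose proof (f_box e He) as Hb.
    rewrite Hge in Ha.
    destruct (Rle_dec (f0 e) (f e)).
    - rewrite Rmin_left, Rmax_right in Hx by lra. eauto.
    - rewrite Rmin_right, Rmax_left in Hx by lra. eauto. }
  rewrite <- (upd_id g e) at 2. rewrite Hge.
  apply (deriv_against_direction (dom e) (fun x => weighted_sum sigma (upd g e x))
           (fun x => lsum out (fun j => sigma j * dG j e (upd g e x)))); auto.
  - intros x Hx. apply deriv_within_lsum. intros j Hj. apply deriv_within_scal.
    pose proof (Gv_deriv j e (upd g e x) Hj He (in_box_upd g e x Hg (Hseg x Hx))) as Hd.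
    rewrite upd_same in Hd.
    replace (fun y => Gv (upd (upd g e x) e y) j) with (fun y => Gv (upd g e y) j) in Hd
      by (apply functional_extensionality; intro; rewrite upd_upd; auto).
    exact Hd.
  - intros x Hx.
    exact (sgn_weighted_partial_nonpos (fun j => f j - f0 j) (upd g e x) e
             (in_box_upd g e x Hg (Hseg x Hx)) He).
Qed.

Lemma weighted_sum_fold_le L g :
  (forall e, In e L -> In e out) -> in_box out dom g ->
  (forall e, In e out -> g e = f0 e \/ g e = f e) ->
  weighted_sum sigma (fold_left (fun g e => upd g e (f e)) L g) <= weighted_sum sigma g.
Proof.
  revert g; induction L as [|a L IH]; simpl; intros g HL Hg Hmix; [lra|].
  assert (Ha : In a out) by auto.
  eapply Rle_trans; [apply IH|].
  - auto.
  - apply in_box_upd; auto.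
  - intros e He. destruct (classic (e = a)) as [->|Hne].
    + rewrite upd_same; auto.
    + rewrite upd_other; auto.
  - destruct (Hmix a Ha) as [Hga|Hga].
    + apply weighted_sum_upd_le; auto.
    + rewrite <- Hga, upd_id. lra.
Qed.

Lemma weighted_sum_le_at_start : in_box out dom f0 ->
  weighted_sum sigma f <= weighted_sum sigma f0.
Proof.
  intros Hf0.
  replace (weighted_sum sigma f)
    with (weighted_sum sigma (fold_left (fun g e => upd g e (f e)) out f0)).
  - apply weighted_sum_fold_le; auto.
  - unfold weighted_sum. rewrite (Gv_local _ f); auto.
    intros e He. apply fold_upd_in; auto.
Qed.

End TowardsTarget.

End Cooperative.

Lemma capdom_interval c x y z : capdom c x -> capdom c z -> x <= y <= z -> capdom c y.
Proof. intros [Hx Hcx] [Hz Hcz] Hy. split; [lra|]. destruct c; simpl in *; auto; lra. Qed.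

Lemma capdom_not_isolated c x : capdom c x ->
  forall d, 0 < d -> exists h, h <> 0 /\ Rabs h < d /\ capdom c (x + h).
Proof.
  intros [Hx Hc] d Hd. destruct c as [c|]; simpl in Hc.
  - set (h := Rmin (d / 2) ((c - x) / 2)).
    assert (0 < h) by (apply Rmin_pos; lra).
    assert (h <= d / 2) by apply Rmin_l. assert (h <= (c - x) / 2) by apply Rmin_r.
    exists h. split; [lra|]. split; [rewrite Rabs_pos_eq; lra|]. split; simpl; lra.
  - exists (d / 2). split; [lra|]. split; [rewrite Rabs_pos_eq; lra|]. split; simpl; auto; lra.
Qed.

Lemma flow_nonneg n E C Ps pi e : inPi n E C Ps pi -> 0 <= flow Ps pi e.
Proof.
  intros [_ [Hpi _]]. apply lsum_nonneg. intros p _.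
  destruct existsb; [apply Hpi|lra].
Qed.

Lemma flow_inF n E C Ps pi v : inPi n E C Ps pi -> inF E C v (flow Ps pi).
Proof.
  intros Hpi e He. split; [eapply flow_nonneg; eauto|].
  apply Hpi. unfold out_edges in He. apply filter_In in He. tauto.
Qed.

Theorem lemma1
  (n : nat) (E : list edge) (C : edge -> option R) (Ps : list (list edge))
  (G : nat -> (edge -> R) -> (list edge -> R) -> edge -> R)
  (Hgraph : good_graph n E)
  (Hcap : forall e c, In e E -> C e = Some c -> 0 < c)
  (HPs : enum_paths n E Ps)
  (* G^v is a function of f_{E_v^+} only *)
  (Hloc : forall v pi f g, (v < n)%nat -> inPi n E C Ps pi ->
     (forall e, In e (out_edges E v) -> f e = g e) -> G v f pi = G v g pi)
  (* G^v takes values in the simplex S(E_v^+) *)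
  (Hsimplex : forall v pi f, (v < n)%nat -> inPi n E C Ps pi -> inF E C v f ->
     (forall e, In e (out_edges E v) -> 0 <= G v f pi e) /\
     lsum (out_edges E v) (G v f pi) = 1)
  (* continuous differentiability in f_{E_v^+} on F_v, and cooperativity *)
  (HC1 : forall v pi, (v < n)%nat -> inPi n E C Ps pi ->
     exists dG : edge -> edge -> (edge -> R) -> R,
       (forall j e f, In j (out_edges E v) -> In e (out_edges E v) -> inF E C v f ->
          deriv_within (capdom (C e)) (fun x => G v (upd f e x) pi j) (f e) (dG j e f)) /\
       (forall j e, In j (out_edges E v) -> In e (out_edges E v) ->
          cont_on_F E C v (dG j e)) /\
       (forall j e f, In j (out_edges E v) -> In e (out_edges E v) -> j <> e ->
          inF E C v f -> 0 <= dG j e f))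
  (* consistency *)
  (Hcons : forall v pi e, (v < n)%nat -> inPi n E C Ps pi -> In e (out_edges E v) ->
     lam E Ps pi v * G v (flow Ps pi) pi e = flow Ps pi e) :
  forall v pi f, (v < n)%nat -> inPi n E C Ps pi -> inF E C v f ->
    lsum (out_edges E v)
      (fun e => sgn (f e - flow Ps pi e) * (lam E Ps pi v * G v f pi e - flow Ps pi e)) <= 0.
Proof.
  intros v pi f Hv Hpi Hf.
  destruct (HC1 v pi Hv Hpi) as [dG [Hderiv [_ Hcoop]]].
  pose proof (weighted_sum_le_at_start (out_edges E v) (fun e => capdom (C e))
    (fun g => G v g pi) dG (fun e => capdom_interval (C e))
    (fun e => capdom_not_isolated (C e)) (fun g g' => Hloc v pi g g' Hv Hpi)
    (fun g Hg => proj2 (Hsimplex v pi g Hv Hpi Hg)) Hderiv Hcoop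
    f (flow Ps pi) Hf (flow_inF n E C Ps pi v Hpi)) as Hle.
  unfold weighted_sum in Hle.
  set (lm := lam E Ps pi v).
  assert (Hlm : 0 <= lm) by (apply lsum_nonneg; intros; eapply flow_nonneg; eauto).
  rewrite (lsum_ext _ _ (fun e => lm * (sgn (f e - flow Ps pi e) * G v f pi e)
                                  + - lm * (sgn (f e - flow Ps pi e) * G v (flow Ps pi) pi e))).
  - rewrite lsum_plus, !lsum_scal. nra.
  - intros e He. rewrite <- (Hcons v pi e Hv Hpi He) at 2. fold lm. ring.
Qed.
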